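(* Let $f,G,h$, $\bar g(x)=\|G(x)G(x)^\intercal\|_\infty$, $\Omega$, its triangulation $\mathcal{T}=\{\sigma_i\}_{i=1}^{m_{\mathcal{T}}}$, and the constants $\beta_i,\tilde\beta_i,\bar\beta_i,c_{i,j}$ be as in the context. Let $\underline{\mathbf{y}}=[\mathbf{V},\mathbf{L},b_1,\gamma]$, with $\mathbf{V}=\{V_x\}_{x\in\mathbb{E}_{\mathcal{T}}}$, $\mathbf{L}=\{l_i\}\subset\mathbb{R}^n$, be a feasible point of system (F): $\gamma>0$; $V_x\ge0$ for all $x\in\mathbb{E}_{\mathcal{T}}$; $|\nabla V_i|\le l_i$ componentwise for all $i$; $H_{i,j}\le -b_1$ for all $i$ and all $j\in\mathbb{Z}_0^n$ with $x_{i,j}\ne0$, where $H_{i,j}=f(x_{i,j})^\intercal\nabla V_i+\tfrac12\|h(x_{i,j})\|_2^2+(1_n^\intercal l_i\beta_i+\tfrac12\tilde\beta_i)c_{i,j}+\tfrac{1}{2\gamma}(\bar g(x_{i,j})+\bar\beta_ic_{i,j})(1_n^\intercal l_i)^2$. Let $J$ be a cost function and consider the problem of minimizing $J(\underline{\mathbf{y}}+\delta\mathbf{y})$ over $\delta\mathbf{y}=[\delta\mathbf{V},\delta\mathbf{L},\delta b_1,\delta\gamma]$ subject to: $\gamma+\delta\gamma>0$; $V_x+\delta V_x\ge0$ for all $x\in\mathbb{E}_{\mathcal{T}}$; $|\nabla V_i+\delta\nabla V_i|\le l_i+\delta l_i$ componentwise for all $i$, where $\delta\nabla V_i=X_i^{-1}\delta\bar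 V_i$; and $P_{i,j}\preceq0$ for all $i$ and all $j$ with $x_{i,j}\ne0$, where $$P_{i,j}=\begin{bmatrix}\phi_{i,j}+b_1+\delta b_1 & \sqrt{e_{i,j}}\,1_n^\intercal(l_i+\delta l_i)\\ \sqrt{e_{i,j}}\,1_n^\intercal(l_i+\delta l_i) & -(\gamma+\delta\gamma)\end{bmatrix},$$ $\phi_{i,j}=f(x_{i,j})^\intercal(\nabla V_i+\delta\nabla V_i)+1_n^\intercal(l_i+\delta l_i)\beta_ic_{i,j}+\tfrac12h(x_{i,j})^\intercal h(x_{i,j})+\tfrac12\tilde\beta_ic_{i,j}$ and $e_{i,j}=\tfrac12\big(\bar g(x_{i,j})+\bar\beta_ic_{i,j}\big)$. Then for every $\delta\mathbf{y}$ feasible for this problem, $\underline{\mathbf{y}}+\delta\mathbf{y}$ is a feasible point of (F); and if $\delta\mathbf{y}^\ast$ is an optimal solution, then $J(\underline{\mathbf{y}}+\delta\mathbf{y}^\ast)\le J(\underline{\mathbf{y}})$.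
   Context: Setting: $f:\mathcal{X}\to\mathbb{R}^n$, $G:\mathcal{X}\to\mathbb{R}^{n\times m}$, $h:\mathcal{X}\to\mathbb{R}^q$, $\Omega\subseteq\mathcal{X}$ a compact set with connected interior containing $0$ and equal to the closure of its interior, $\mathcal{T}$ a triangulation of $\Omega$ (finite collection of $n$-simplexes $\sigma_i=\mathrm{co}(\{x_{i,j}\}_{j=0}^n)$ covering $\Omega$, pairwise meeting in common faces or not at all; vertex set $\mathbb{E}_{\mathcal{T}}$; $x_{i,0}=0$ when $0\in\sigma_i$), with $f,G,h$ continuous and $\mathcal{C}^2$ on each simplex. Constants: $\beta_i$, $\tilde\beta_i$, $\bar\beta_i$ are upper bounds over $\sigma_i$ of the absolute values of all second partial derivatives of the components of $f$, of $h^\intercal h$, and of $\bar g$, respectively; $c_{i,j}=\tfrac n2\|x_{i,j}-x_{i,0}\|_2(\max_{k\in\mathbb{Z}_1^n}\|x_{i,k}-x_{i,0}\|_2+\|x_{i,j}-x_{i,0}\|_2)$. $X_i$ is the matrix with rows $(x_{i,j}-x_{i,0})^\intercal$, $\bar V_i$ (resp. $\delta\bar V_i$) the vector with entries $V_{x_{i,j}}-V_{x_{i,0}}$ (resp. $\delta V_{x_{i,j}}-\delta V_{x_{i,0}}$), and $\nabla V_i=X_i^{-1}\bar V_i$. $\|\cdot\|_\infty$ on matrices is the induced norm, $1_n$ the all-ones vector, $|v|$ componentwise absolute value, $\preceq0$ negative semidefinite. *)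

From HB Require Import structures.
From mathcomp Require Import all_boot all_order all_algebra.
From mathcomp Require Import all_classical all_reals all_analysis.
Set Implicit Arguments. Unset Strict Implicit. Unset Printing Implicit Defensive.
Import Order.TTheory GRing.Theory Num.Theory.
Import numFieldNormedType.Exports.
Local Open Scope ring_scope.

Section Defs.
Variable R : realType.

Definition norm2 (n : nat) (v : 'cV[R]_n) : R := Num.sqrt (\sum_(k < n) v k 0 ^+ 2).

Definition mxnorm_inf (p q : nat) (A : 'M[R]_(p, q)) : R :=
  \big[Num.max/0]_(r < p) \sum_(c < q) `|A r c|.

Definition abs_le (n : nat) (u w : 'cV[R]_n) : Prop := forall k, `|u k 0| <= w k 0.

Definition nsd (p : nat) (A : 'M[R]_p) : Prop :=
  forall v : 'cV[R]_p, (v^T *m A *m v) 0 0 <= 0.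

Definition in_simplex (n : nat) (x : 'I_n.+1 -> 'cV[R]_n) (y : 'cV[R]_n) : Prop :=
  exists w : 'I_n.+1 -> R, (forall j, 0 <= w j) /\ \sum_j w j = 1 /\
    y = \sum_j w j *: x j.

Definition sum1 (n : nat) (v : 'cV[R]_n) : R := \sum_(k < n) v k 0.

Definition Xmat (n : nat) (x : 'I_n.+1 -> 'cV[R]_n) : 'M[R]_n :=
  \matrix_(k < n, c < n) (x (lift ord0 k) c 0 - x ord0 c 0).

Definition Vbar (n : nat) (x : 'I_n.+1 -> 'cV[R]_n) (V : 'cV[R]_n -> R) : 'cV[R]_n :=
  \col_(k < n) (V (x (lift ord0 k)) - V (x ord0)).

Definition gradV (n : nat) (x : 'I_n.+1 -> 'cV[R]_n) (V : 'cV[R]_n -> R) : 'cV[R]_n :=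
  invmx (Xmat x) *m Vbar x V.

Definition cconst (n : nat) (x : 'I_n.+1 -> 'cV[R]_n) (j : 'I_n.+1) : R :=
  (n%:R / 2) * norm2 (x j - x ord0) *
  (\big[Num.max/0]_(k < n) norm2 (x (lift ord0 k) - x ord0) + norm2 (x j - x ord0)).

Definition gbar (n p : nat) (G : 'cV[R]_n -> 'M[R]_(n, p)) (y : 'cV[R]_n) : R :=
  mxnorm_inf (G y *m (G y)^T).

Definition d2 (n : nat) (phi : 'cV[R]_n -> R) (k l : 'I_n) (y : 'cV[R]_n) : R :=
  'D_(delta_mx k 0 : 'cV[R]_n) (fun z => 'D_(delta_mx l 0 : 'cV[R]_n) phi z) y.

Definition bounds_d2 (n : nat) (x : 'I_n.+1 -> 'cV[R]_n) (phi : 'cV[R]_n -> R) (beta : R) : Prop :=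
  forall y, in_simplex x y -> forall k l, `|d2 phi k l y| <= beta.

Definition decvar (n m : nat) : Type :=
  (('cV[R]_n -> R) * ('I_m -> 'cV[R]_n) * R * R)%type.

Definition dv_add (n m : nat) (y d : decvar n m) : decvar n m :=
  let: (V, L, b, g) := y in let: (dV, dL, db, dg) := d in
  (fun z => V z + dV z, fun i => L i + dL i, b + db, g + dg).

Section Problem.
Variables (n m p q : nat).
Variables (f : 'cV[R]_n -> 'cV[R]_n) (G : 'cV[R]_n -> 'M[R]_(n, p))
          (h : 'cV[R]_n -> 'cV[R]_q).
Variable (x : 'I_m -> 'I_n.+1 -> 'cV[R]_n).
Variables (beta betat betab : 'I_m -> R).

Definition Hij (V : 'cV[R]_n -> R) (l : 'cV[R]_n) (gam : R) (i : 'I_m) (j : 'I_n.+1) : R :=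
  let xij := x i j in let c := cconst (x i) j in
  ((f xij)^T *m gradV (x i) V) 0 0 + (norm2 (h xij)) ^+ 2 / 2
  + (sum1 l * beta i + betat i / 2) * c
  + (gbar G xij + betab i * c) * (sum1 l) ^+ 2 / (2 * gam).

(* feasibility for system (F); E_T = {x_{i,j}} *)
Definition feasibleF (y : decvar n m) : Prop :=
  let: (V, L, b1, gam) := y in
  [/\ 0 < gam,
      forall i j, 0 <= V (x i j),
      forall i, abs_le (gradV (x i) V) (L i) &
      forall i j, x i j != 0 -> Hij V (L i) gam i j <= - b1].

Definition Pij (y d : decvar n m) (i : 'I_m) (j : 'I_n.+1) : 'M[R]_2 :=
  let: (V, L, b1, gam) := y in let: (dV, dL, db, dg) := d in
  let xij := x i j in let c := cconst (x i) j in
  let phi := ((f xij)^T *m (gradV (x i) V + gradV (x i) dV)) 0 0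
             + sum1 (L i + dL i) * beta i * c
             + ((h xij)^T *m h xij) 0 0 / 2 + betat i * c / 2 in
  let e := (gbar G xij + betab i * c) / 2 in
  let off := Num.sqrt e * sum1 (L i + dL i) in
  \matrix_(a < 2, b < 2)
    (if (a == 0 :> nat) && (b == 0 :> nat) then phi + b1 + db
     else if (a == 1 :> nat) && (b == 1 :> nat) then - (gam + dg)
     else off).

Definition feasibleP (y d : decvar n m) : Prop :=
  let: (V, L, b1, gam) := y in let: (dV, dL, db, dg) := d in
  [/\ 0 < gam + dg,
      forall i j, 0 <= V (x i j) + dV (x i j),
      forall i, abs_le (gradV (x i) V + gradV (x i) dV) (L i + dL i) &
      forall i j, x i j != 0 -> nsd (Pij y d i j)].

Definition optimalP (J : decvar n m -> R) (y d : decvar n m) : Prop :=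
  feasibleP y d /\ forall d', feasibleP y d' -> J (dv_add y d) <= J (dv_add y d').

End Problem.
End Defs.

(* The LMI [P_ij ⪯ 0] is a Schur complement: since its lower-right entry
   [-(γ + δγ)] is negative, [P_ij ⪯ 0] holds iff
   [φ_ij + b1 + δb1 + e_ij (1ᵀ(l_i + δl_i))² / (γ + δγ) <= 0], and because
   [∇V_i] is linear in [V] this is exactly the constraint [H_ij <= -b1] of (F)
   at the updated point; here [√e_ij² = e_ij] needs [e_ij >= 0], which is the
   only use of the second-derivative bounds ([β̄_i >= 0]).  The remaining
   constraints of (F) are copied verbatim, so every feasible [δy] yields a
   feasible [y + δy]; conversely [δy = 0] is feasible when [y] is, whence an
   optimal [δy*] does no worse than [0]. *)
From HB Require Import structures.
From mathcomp Require Import all_boot all_order all_algebra.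
From mathcomp Require Import all_classical all_reals all_analysis.
From mathcomp Require Import ring lra.
Import Order.TTheory GRing.Theory Num.Theory.
Import numFieldNormedType.Exports.
Local Open Scope ring_scope.

Section Preliminaries.
Context {R : realType}.

Definition sym2 (a o g : R) : 'M[R]_2 :=
  \matrix_(i < 2, j < 2)
    (if (i == 0 :> nat) && (j == 0 :> nat) then a
     else if (i == 1 :> nat) && (j == 1 :> nat) then - g
     else o).

Lemma sym2_formE (a o g : R) (v : 'cV[R]_2) :
  (v^T *m sym2 a o g *m v) 0 0 = a * v 0 0 ^+ 2 + 2 * o * v 0 0 * v 1 0 - g * v 1 0 ^+ 2.
Proof.
rewrite !mxE !big_ord_recr !big_ord0 /= !mxE !big_ord_recr !big_ord0 /= !mxE /=.
have -> : v (widen_ord (leqnSn 1) ord_max) 0 = v 0 0 by congr (v _ _); apply/val_inj.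
have -> : v ord_max 0 = v 1 0 by congr (v _ _); apply/val_inj.
ring.
Qed.

Lemma nsd_sym2P {a o g : R} : 0 < g -> nsd (sym2 a o g) <-> a * g + o ^+ 2 <= 0.
Proof.
move=> g_gt0; split=> [nsdA | schur v].
  have := nsdA (\col_i (if i == 0 :> nat then g else o)).
  rewrite sym2_formE !mxE /=.
  have -> : a * g ^+ 2 + 2 * o * g * o - g * o ^+ 2 = g * (a * g + o ^+ 2) by ring.
  by rewrite pmulr_rle0.
rewrite sym2_formE -(pmulr_rle0 _ g_gt0).
set u := v 0 0; set w := v 1 0.
have -> : g * (a * u ^+ 2 + 2 * o * u * w - g * w ^+ 2)
          = (a * g + o ^+ 2) * u ^+ 2 - (o * u - g * w) ^+ 2 by ring.
have := sqr_ge0 (o * u - g * w); have := sqr_ge0 u; nra.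
Qed.

Lemma schur_le0 (a o g : R) : 0 < g -> (a * g + o ^+ 2 <= 0) = (a + o ^+ 2 / g <= 0).
Proof.
by move=> g_gt0; rewrite -(pmulr_lle0 (a + _) g_gt0) mulrDl mulfVK ?gt_eqF.
Qed.

Lemma sqr_norm2 {k} (v : 'cV[R]_k) : norm2 v ^+ 2 = (v^T *m v) 0 0.
Proof.
rewrite /norm2 sqr_sqrtr; last by apply: sumr_ge0 => i _; apply: sqr_ge0.
by rewrite mxE; apply: eq_bigr => i _; rewrite mxE expr2.
Qed.

Lemma norm2_ge0 {k} (v : 'cV[R]_k) : 0 <= norm2 v.
Proof. exact: sqrtr_ge0. Qed.

Lemma bigmax_ge0 {k} (F : 'I_k -> R) :
  (forall i, 0 <= F i) -> 0 <= \big[Num.max/0]_(i < k) F i.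
Proof.
by move=> F_ge0; apply: (big_ind (fun t => 0 <= t)) => // a b a_ge0 _; rewrite le_max a_ge0.
Qed.

Lemma gbar_ge0 {n p} (G : 'cV[R]_n -> 'M[R]_(n, p)) z : 0 <= gbar G z.
Proof. by apply: bigmax_ge0 => r; apply: sumr_ge0 => c _; apply: normr_ge0. Qed.

Lemma cconst_ge0 {n} (x : 'I_n.+1 -> 'cV[R]_n) j : 0 <= cconst x j.
Proof.
apply: mulr_ge0; first by apply: mulr_ge0; [rewrite divr_ge0 ?ler0n | apply: norm2_ge0].
by apply: addr_ge0; [apply: bigmax_ge0 => k |]; apply: norm2_ge0.
Qed.

Lemma gradVD {n} (x : 'I_n.+1 -> 'cV[R]_n) (V W : 'cV[R]_n -> R) :
  gradV x (fun z => V z + W z) = gradV x V + gradV x W.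
Proof.
by rewrite /gradV -mulmxDr; congr (_ *m _); apply/matrixP => k c; rewrite !mxE opprD addrACA.
Qed.

Lemma in_simplex_vertex {n} (x : 'I_n.+1 -> 'cV[R]_n) j : in_simplex x (x j).
Proof.
exists (fun k => (k == j)%:R); split; first by move=> k; apply: ler0n.
split.
  by rewrite (bigD1 j) //= eqxx big1 ?addr0 // => k /negbTE ->.
by rewrite (bigD1 j) //= eqxx scale1r big1 ?addr0 // => k /negbTE ->; rewrite scale0r.
Qed.

(* For [n = 0] the bound [b] is unconstrained, but then [cconst x j = 0]. *)
Lemma bounds_d2_cconst_ge0 {n} {x : 'I_n.+1 -> 'cV[R]_n} {phi b} j :
  bounds_d2 x phi b -> 0 <= b * cconst x j.
Proof.
case: n x phi j => [|n] x phi j bound_b; first by rewrite /cconst !mul0r mulr0.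
apply: mulr_ge0; last exact: cconst_ge0.
apply: le_trans (normr_ge0 _) _.
exact: bound_b _ (in_simplex_vertex x ord0) ord0 ord0.
Qed.

Definition dv0 n m : decvar R n m := (fun _ => 0, fun _ => 0, 0, 0).

Lemma dv_addr0 {n m} (y : decvar R n m) : dv_add y (dv0 n m) = y.
Proof.
case: y => [[[V L] b1] gam] /=.
by rewrite !addr0; congr (_, _, _, _); apply: funext => z; rewrite addr0.
Qed.

End Preliminaries.

Section Problem.
Context {R : realType} {n m p q : nat}.
Context {f : 'cV[R]_n -> 'cV[R]_n} {G : 'cV[R]_n -> 'M[R]_(n, p)}
        {h : 'cV[R]_n -> 'cV[R]_q} {x : 'I_m -> 'I_n.+1 -> 'cV[R]_n}
        {beta betat betab : 'I_m -> R}.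
Hypothesis betab_bound : forall i, bounds_d2 (x i) (gbar G) (betab i).

Local Notation H := (Hij f G h x beta betat betab).
Local Notation P := (Pij f G h x beta betat betab).
Local Notation feasF := (feasibleF f G h x beta betat betab).
Local Notation feasP := (feasibleP f G h x beta betat betab).

Lemma Pij_nsdE {V L b1 gam dV dL db dg i j} : 0 < gam + dg ->
  nsd (P (V, L, b1, gam) (dV, dL, db, dg) i j) <->
  H (fun z => V z + dV z) (L i + dL i) (gam + dg) i j <= - (b1 + db).
Proof.
move=> g_gt0; apply: iff_trans (nsd_sym2P g_gt0) _.
have e_ge0 : 0 <= (gbar G (x i j) + betab i * cconst (x i) j) / 2.
  apply: divr_ge0 => //; apply: addr_ge0 (gbar_ge0 G _) _.
  exact: bounds_d2_cconst_ge0 j (betab_bound i).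
rewrite schur_le0 // -(subr_le0 _ (H _ _ _ _ _)) opprK exprMn sqr_sqrtr //.
suff -> : H (fun z => V z + dV z) (L i + dL i) (gam + dg) i j + (b1 + db) =
  ((f (x i j))^T *m (gradV (x i) V + gradV (x i) dV)) 0 0
  + sum1 (L i + dL i) * beta i * cconst (x i) j
  + ((h (x i j))^T *m h (x i j)) 0 0 / 2 + betat i * cconst (x i) j / 2 + b1 + db
  + (gbar G (x i j) + betab i * cconst (x i) j) / 2 * sum1 (L i + dL i) ^+ 2 / (gam + dg) by [].
by rewrite /Hij gradVD sqr_norm2; field; rewrite gt_eqF.
Qed.

Lemma feasibleP_dv_add y d : feasP y d -> feasF (dv_add y d).
Proof.
case: y d => [[[V L] b1] gam] [[[dV dL] db] dg] [g_gt0 V_ge0 grad_le P_nsd].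
split=> // [i|i j /P_nsd]; first by rewrite gradVD.
by move/(Pij_nsdE g_gt0).
Qed.

Lemma feasibleP_dv0 y : feasF y -> feasP y (dv0 n m).
Proof.
case: y => [[[V L] b1] gam] [g_gt0 V_ge0 grad_le H_le].
have addV0 : (fun z => V z + 0) = V by apply: funext => z; rewrite addr0.
have g0_gt0 : 0 < gam + 0 by rewrite addr0.
split=> // [i j|i|i j /H_le H_le_b1]; rewrite ?addr0 //.
  by rewrite -gradVD addV0.
by apply/(Pij_nsdE g0_gt0); rewrite addV0 !addr0.
Qed.

End Problem.

Theorem theorem4 (R : realType) (n m p q : nat)
  (f : 'cV[R]_n -> 'cV[R]_n) (G : 'cV[R]_n -> 'M[R]_(n, p)) (h : 'cV[R]_n -> 'cV[R]_q)
  (x : 'I_m -> 'I_n.+1 -> 'cV[R]_n)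
  (beta betat betab : 'I_m -> R)
  (J : decvar R n m -> R) (y : decvar R n m) :
  continuous f -> continuous G -> continuous h ->
  (forall i, Xmat (x i) \in unitmx) ->
  (forall i, in_simplex (x i) 0 -> x i ord0 = 0) ->
  (forall i r, bounds_d2 (x i) (fun z => f z r 0) (beta i)) ->
  (forall i, bounds_d2 (x i) (fun z => ((h z)^T *m h z) 0 0) (betat i)) ->
  (forall i, bounds_d2 (x i) (gbar G) (betab i)) ->
  feasibleF f G h x beta betat betab y ->
  (forall d, feasibleP f G h x beta betat betab y d ->
     feasibleF f G h x beta betat betab (dv_add y d)) /\
  (forall dstar, optimalP f G h x beta betat betab J y dstar ->
     J (dv_add y dstar) <= J y).
Proof.
move=> _ _ _ _ _ _ _ betab_bound feasible_y; split=> [d|dstar [_ dstar_opt]].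
  exact: feasibleP_dv_add betab_bound y d.
rewrite -[in J y](dv_addr0 y); apply: (dstar_opt (dv0 n m)).
exact: feasibleP_dv0 betab_bound y feasible_y.
Qed.
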